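(* The short exact sequence $1\to\mathrm{Sym}(\{0,1\}^* )\to QT\xrightarrow{\pi} T\to 1$ does not split, i.e. there is no homomorphism $j:T\to QT$ with $\pi\circ j=\mathrm{id}_T$.
   Context: Let $\{0,1\}^*$ be the finite words over $\{0,1\}$, the vertices of the rooted binary tree in which $x$ has children $x0$ and $x1$ (two edge colours). $QV$ is the group of bijections $\tau$ of $\{0,1\}^*$ with $\tau(x0)=\tau(x)0$ and $\tau(x1)=\tau(x)1$ for all but finitely many $x$. Each such $\tau$ induces a homeomorphism $\pi(\tau)$ of $\{0,1\}^{\mathbb N}$ by $\pi(\tau)(\ell\omega)=\tau(\ell)\omega$, for $\ell$ in a finite maximal prefix-antichain $L$ with $\tau(\ell s)=\tau(\ell)s$ for all $\ell\in L$ and words $s$; this gives a surjective homomorphism $\pi:QV\to V$ onto Thompson's group $V$ with kernel $\mathrm{Sym}(\{0,1\}^* )$, the finitely supported permutations of $\{0,1\}^*$. Thompson's group $T\le V$ consists of the elements preserving the cyclic lexicographic order of $\{0,1\}^{\mathbb N}$; $QT=\pi^{-1}(T)$ and $\pi$ also denotes its restriction to $QT$. *)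

From mathcomp Require Import all_boot.
Set Implicit Arguments. Unset Strict Implicit. Unset Printing Implicit Defensive.

(** Finite words over {0,1}: [seq bool] (false = 0, true = 1).
    Vertices of the rooted binary tree; children of x are rcons x false/true. *)
Definition word := seq bool.

Definition stream := nat -> bool.

Definition prepend (w : word) (om : stream) : stream :=
  fun n => if n < size w then nth false w n else om (n - size w).

Definition inQV (tau : word -> word) : Prop :=
  bijective tau /\
  exists S : seq word, forall x : word, x \notin S ->
    forall b : bool, tau (rcons x b) = rcons (tau x) b.

Definition max_prefix_antichain (L : seq word) : Prop :=
  (forall l l', l \in L -> l' \in L -> prefix l l' -> l = l') /\
  (forall x : word, exists2 l, l \in L & prefix l x || prefix x l).

Definition is_pi (tau : word -> word) (f : stream -> stream) : Prop :=
  exists L : seq word, max_prefix_antichain L /\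
    (forall l, l \in L -> forall s : word, tau (l ++ s) = tau l ++ s) /\
    (forall l, l \in L -> forall om : stream, f (prepend l om) = prepend (tau l) om).

Definition inV (f : stream -> stream) : Prop :=
  exists tau, inQV tau /\ is_pi tau f.

Definition lex_lt (a b : stream) : Prop :=
  exists n, (forall i, i < n -> a i = b i) /\ a n = false /\ b n = true.

Definition cyc (a b c : stream) : Prop :=
  (lex_lt a b /\ lex_lt b c) \/ (lex_lt b c /\ lex_lt c a) \/
  (lex_lt c a /\ lex_lt a b).

Definition inT (f : stream -> stream) : Prop :=
  inV f /\ forall a b c, cyc a b c -> cyc (f a) (f b) (f c).

Definition inQT (tau : word -> word) : Prop :=
  exists f, inT f /\ inQV tau /\ is_pi tau f.

Definition splitting (j : (stream -> stream) -> (word -> word)) : Prop :=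
  (forall t, inT t -> inQT (j t) /\ is_pi (j t) t) /\
  (forall t u v, inT t -> inT u -> inT v ->
     (forall om, v om = t (u om)) ->
     forall x, j v x = j t (j u x)).

(* Let [rot k] be the rotation of the circle {0,1}^N by 2^-k; it lies in T and
   [rot (K+1)] raised to the power 2^K is [rot 1]. If j splits pi, then
   sigma = j (rot 1) agrees with the flip of the first letter on words of
   length >= N, so it fixes fewer than 2^(N+1) words. Now tau = j (rot (N+2))
   satisfies tau^(2^(N+2)) = id and tau^(2^(N+1)) = sigma, and it agrees with a
   length-preserving rotation of words on long words, hence permutes the set W
   of the 2^M - 1 words of length < M for M large. The points of W moved by
   sigma form orbits of tau of length exactly 2^(N+2), so 2^(N+2) divides
   2^M - 1 - #(fixed points of sigma in W), i.e. it divides a number between 1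
   and 2^(N+1): a contradiction. *)

From Stdlib Require Import FunctionalExtensionality Lia.
From mathcomp Require Import all_boot zify.
Set Implicit Arguments. Unset Strict Implicit. Unset Printing Implicit Defensive.

Fixpoint binval (k : nat) (f : stream) : nat :=
  if k is k'.+1 then (binval k' f).*2 + f k' else 0.

(* [rot k] adds 1 modulo [2 ^ k] to the number [binval k] read off the first
   [k] digits, i.e. rotates the circle by [2 ^ -k]: digit [n < k] flips exactly
   when the digits [n+1 .. k-1] are all 1 (the carry). *)
Definition rot (k : nat) (om : stream) : stream :=
  fun n => if n < k then om n (+) all om (iota n.+1 (k - n.+1)) else om n.

Lemma eq_binval k f g : (forall m, m < k -> f m = g m) -> binval k f = binval k g.
Proof.
elim: k => [//|k IH] fg /=.
by rewrite IH ?fg // => m /ltnW; apply: fg.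
Qed.

Lemma binval_lt k f : binval k f < 2 ^ k.
Proof. elim: k => [//|k IH] /=; rewrite expnS; case: (f k) => /=; lia. Qed.

Lemma binval_inj k f g : binval k f = binval k g -> forall m, m < k -> f m = g m.
Proof.
elim: k => [//|k IH] /= fg m.
have fgk : f k = g k by move: fg; case: (f k); case: (g k) => //=; lia.
have {}fg : binval k f = binval k g by move: fg; rewrite fgk; lia.
by rewrite ltnS leq_eqVlt => /predU1P [-> //|]; apply: IH.
Qed.

Lemma binval_head k f : binval k.+1 f = f 0 * 2 ^ k + binval k (fun m => f m.+1).
Proof.
elim: k => [|k IH]; first by rewrite /= expn0; case: (f 0).
by rewrite -[LHS]/((binval k.+1 f).*2 + f k.+1) IH expnS /=; lia.
Qed.

Lemma rot_high k om n : k <= n -> rot k om n = om n.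
Proof. by rewrite /rot leqNgt => /negbTE ->. Qed.

Lemma eq_rot k f g n : (forall m, m < k -> f m = g m) -> f n = g n ->
  rot k f n = rot k g n.
Proof.
move=> fg fgn; rewrite /rot fgn; case: ifP => // nk; congr (_ (+) _).
by apply: eq_in_all => m; rewrite mem_iota => /andP [_ mk]; apply: fg; lia.
Qed.

Lemma rotS_low k f m : m < k -> rot k.+1 f m = if f k then rot k f m else f m.
Proof.
move=> mk; rewrite /rot ltnS (ltnW mk) mk.
have -> : k.+1 - m.+1 = (k - m.+1) + 1 by lia.
rewrite iotaD all_cat /=; have -> : m.+1 + (k - m.+1) = k by lia.
by case: (f k); rewrite ?andbT ?andbF ?addbF.
Qed.

Lemma rotS_top k f : rot k.+1 f k = ~~ f k.
Proof. by rewrite /rot ltnSn subnn /= addbT. Qed.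

Lemma binval_rot k f : binval k (rot k f) = (binval k f).+1 %% 2 ^ k.
Proof.
elim: k f => [|k IH] f /=; first by rewrite modn1.
have fk_lt := binval_lt k f.
rewrite rotS_top expnS; case fk: (f k) => /=.
  rewrite (@eq_binval k _ (rot k f)); last by move=> m mk; rewrite rotS_low // fk.
  rewrite IH; have [full|ne] := eqVneq (binval k f).+1 (2 ^ k).
    have -> : ((binval k f).*2 + true).+1 = 2 * 2 ^ k by lia.
    by rewrite full !modnn.
  rewrite !modn_small; lia.
rewrite (@eq_binval k _ f); last by move=> m mk; rewrite rotS_low // fk.
rewrite modn_small; lia.
Qed.

Lemma binval_iter_rot k i om : binval k (iter i (rot k) om) = (binval k om + i) %% 2 ^ k.
Proof.
elim: i => [|i IH]; first by rewrite addn0 modn_small // binval_lt.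
by rewrite iterS binval_rot IH -addn1 modnDml addn1 addnS.
Qed.

Lemma iter_rot_high k i om n : k <= n -> iter i (rot k) om n = om n.
Proof. by move=> kn; elim: i => [//|i IH]; rewrite iterS rot_high. Qed.

Lemma iter_rot_period k : iter (2 ^ k) (rot k) = id.
Proof.
apply: functional_extensionality => om; apply: functional_extensionality => n.
case: (ltnP n k) => nk; last exact: iter_rot_high.
apply: (binval_inj (k := k)) => //.
by rewrite binval_iter_rot modnDr modn_small // binval_lt.
Qed.

Lemma iter_rot_half K : iter (2 ^ K) (rot K.+1) = rot 1.
Proof.
apply: functional_extensionality => om; apply: functional_extensionality => n.
case: (ltnP n K.+1) => nK; last by rewrite iter_rot_high // rot_high //; lia.
apply: (binval_inj (k := K.+1)) => //.
rewrite binval_iter_rot !binval_head.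
rewrite (@eq_binval K (fun m => rot 1 om m.+1) (fun m => om m.+1)); last first.
  by move=> m _; rewrite rot_high.
have -> : rot 1 om 0 = ~~ om 0 by rewrite /rot /= addbT.
have := binval_lt K (fun m => om m.+1); rewrite expnS.
case: (om 0) => /= tail_lt; last by rewrite modn_small; lia.
have -> : 1 * 2 ^ K + binval K (fun m => om m.+1) + 2 ^ K =
          binval K (fun m => om m.+1) + 2 * 2 ^ K by lia.
by rewrite modnDr modn_small; lia.
Qed.

Lemma lex_irr a : ~ lex_lt a a.
Proof. by case=> n [_ [-> ]]. Qed.

Lemma lex_trans a b c : lex_lt a b -> lex_lt b c -> lex_lt a c.
Proof.
case=> n [abn [an bn]] [m [bcm [bm cm]]].
have [nm|mn|nm] := ltngtP n m.
- exists n; split; last by rewrite an -(bcm _ nm).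
  by move=> i ilt; rewrite abn // bcm //; lia.
- exists m; split; last by rewrite (abn _ mn).
  by move=> i ilt; rewrite abn ?bcm //; lia.
- by move: bm; rewrite -nm bn.
Qed.

Lemma lex_asym a b : lex_lt a b -> ~ lex_lt b a.
Proof. by move=> ab /(lex_trans ab); apply: lex_irr. Qed.

Lemma cyc_piecewise (r : stream -> stream) (P : pred stream) :
  (forall a b, P a = P b -> lex_lt a b -> lex_lt (r a) (r b)) ->
  (forall a b, ~~ P a -> P b -> lex_lt a b) ->
  (forall a b, P a -> ~~ P b -> lex_lt (r a) (r b)) ->
  forall a b c, cyc a b c -> cyc (r a) (r b) (r c).
Proof.
move=> mono up down a b c abc.
case Pa: (P a); case Pb: (P b); case Pc: (P c);
  move: (mono a b) (mono b c) (mono c a) (up a b) (up b c) (up c a)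
        (up b a) (up c b) (up a c) (down a b) (down b c) (down c a)
        (down b a) (down c b) (down a c);
  rewrite Pa Pb Pc /= => ? ? ? ? ? ? ? ? ? ? ? ? ? ? ?;
  case: abc => [[? ?]|[[? ?]|[? ?]]];
  repeat match goal with
  | H : ?x = ?x -> _ |- _ => specialize (H erefl)
  | H : is_true true -> _ |- _ => specialize (H isT)
  | H : ?A -> _, H' : ?A |- _ => specialize (H H') end;
  first [ exfalso; match goal with
          | H : lex_lt ?x ?y, H' : lex_lt ?y ?x |- _ => exact: lex_asym H H' end
        | by left | by right; left | by right; right ].
Qed.

Lemma lex_of_binval_lt k a b : binval k a < binval k b -> lex_lt a b.
Proof.
elim: k => [//|k IH] /=.
have [lt|gt|eq] := ltngtP (binval k a) (binval k b).
- by move=> _; apply: IH.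
- by case: (a k); case: (b k) => /=; lia.
- rewrite eq; case ak: (a k); case bk: (b k) => //=; try lia.
  by move=> _; exists k; split => //; apply: binval_inj eq.
Qed.

Lemma binval_lt_of_lex k a b : lex_lt a b ->
  binval k a < binval k b \/ forall m, m < k -> a m = b m.
Proof.
case=> n [abn [an bn]]; elim: k => [|k [lt|eq]]; [by right | left | ].
  by rewrite /=; case: (a k); case: (b k) => /=; lia.
have [kn|nk|->] := ltngtP k n.
- by right=> m mk; apply: abn; lia.
- by move: (eq n nk); rewrite an bn.
- by left; rewrite /= (eq_binval abn) an bn; lia.
Qed.

Lemma lex_rot_agree k a b : (forall m, m < k -> a m = b m) -> lex_lt a b ->
  lex_lt (rot k a) (rot k b).
Proof.
move=> ab [n [abn [an bn]]].
have kn : k <= n by rewrite leqNgt; apply/negP => /ab; rewrite an bn.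
exists n; split; last by rewrite !rot_high.
move=> i ilt; case: (ltnP i k) => ik; first by apply: eq_rot => //; apply: ab.
by rewrite !rot_high // abn.
Qed.

Lemma cyc_rot k a b c : cyc a b c -> cyc (rot k a) (rot k b) (rot k c).
Proof.
have top_lt x : binval k x != (2 ^ k).-1 -> (binval k x).+1 < 2 ^ k.
  by have := binval_lt k x; lia.
(* [rot k] is increasing except on the top arc, where the first [k] digits are all 1
   and which it sends to the bottom. *)
apply: (@cyc_piecewise _ (fun x => binval k x == (2 ^ k).-1)).
- move=> x y Pxy xy; case: (binval_lt_of_lex k xy) => [lt|agree]; last first.
    exact: lex_rot_agree.
  apply: (@lex_of_binval_lt k); rewrite !binval_rot !modn_small //; last first.
    by apply: top_lt; move: Pxy; case: eqP => //; lia.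
  by apply: top_lt; move: Pxy; case: (eqVneq (binval k y)) => // top; lia.
- by move=> x y /top_lt x_lt /eqP y_top; apply: (@lex_of_binval_lt k); lia.
- move=> x y /eqP x_top /top_lt y_lt; apply: (@lex_of_binval_lt k).
  rewrite !binval_rot (_ : (binval k x).+1 = 2 ^ k); last first.
    by rewrite x_top prednK ?expn_gt0.
  by rewrite modnn modn_small //; lia.
Qed.

(* The lift of [rot k] to QV: it acts on the first [k] letters of words of length
   at least [k] and fixes shorter words. *)
Definition wrot (k : nat) (x : word) : word :=
  if k <= size x then mkseq (rot k (nth false x)) (size x) else x.

Lemma size_wrot k x : size (wrot k x) = size x.
Proof. by rewrite /wrot; case: ifP; rewrite ?size_mkseq. Qed.

Lemma wrot_short k x : size x < k -> wrot k x = x.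
Proof. by rewrite /wrot ltnNge => /negbTE ->. Qed.

Lemma prepend_wrot k x om : k <= size x ->
  rot k (prepend x om) = prepend (wrot k x) om.
Proof.
move=> kx; apply: functional_extensionality => n.
rewrite /prepend /wrot kx size_mkseq; case: ifP => nx.
  by rewrite nth_mkseq //; apply: eq_rot => [m mk|]; rewrite ?nx //; case: ltnP => //; lia.
by rewrite rot_high ?nx //; lia.
Qed.

Lemma wrot_cat k l s : k <= size l -> wrot k (l ++ s) = wrot k l ++ s.
Proof.
move=> kl; rewrite /wrot size_cat kl (leq_trans kl (leq_addr _ _)).
apply: (@eq_from_nth _ false); first by rewrite size_cat !size_mkseq.
move=> n; rewrite size_mkseq => ns; rewrite nth_mkseq // nth_cat size_mkseq.
case: ifP => nl; last by rewrite rot_high ?nth_cat ?nl //; lia.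
rewrite nth_mkseq //; apply: eq_rot => [m mk|]; rewrite nth_cat ?nl //.
by case: ltnP => //; lia.
Qed.

Lemma prepend_cat a b om : prepend (a ++ b) om = prepend a (prepend b om).
Proof.
apply: functional_extensionality => n; rewrite /prepend size_cat nth_cat.
case: ifP => nab; case: ifP => na //; try lia.
- by case: ltnP => //; lia.
- by case: ltnP => [|_]; [lia | congr om; lia].
Qed.

Lemma prepend_inj a b : (forall om, prepend a om = prepend b om) -> a = b.
Proof.
(* if [size a' < size b'], a stream disagreeing with [b'] at [size a'] separates them *)
have size_le a' b' : (forall om, prepend a' om = prepend b' om) -> size b' <= size a'.
  move=> ab; rewrite leqNgt; apply/negP => ltab.
  have := congr1 (fun f => f (size a')) (ab (fun _ => ~~ nth false b' (size a'))).
  by rewrite /prepend ltnn ltab; case: (nth _ _ _).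
move=> ab; have size_ab : size a = size b.
  by apply/eqP; rewrite eqn_leq !size_le // => om; rewrite ab.
apply: (@eq_from_nth _ false) => // n na.
have := congr1 (fun f => f n) (ab (fun _ => false)).
by rewrite /prepend na -size_ab na.
Qed.

Lemma size_iter_wrot k i x : size (iter i (wrot k) x) = size x.
Proof. by elim: i => [//|i IH]; rewrite iterS size_wrot. Qed.

Lemma iter_wrot_prepend k i x om : k <= size x ->
  iter i (rot k) (prepend x om) = prepend (iter i (wrot k) x) om.
Proof.
by move=> kx; elim: i => [//|i IH]; rewrite !iterS IH prepend_wrot ?size_iter_wrot.
Qed.

Lemma iter_wrot_cat k i l s : k <= size l ->
  iter i (wrot k) (l ++ s) = iter i (wrot k) l ++ s.
Proof.
by move=> kl; elim: i => [//|i IH]; rewrite !iterS IH wrot_cat ?size_iter_wrot.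
Qed.

Lemma iter_wrot_period k x : iter (2 ^ k) (wrot k) x = x.
Proof.
case: (ltnP (size x) k) => kx; first by rewrite iter_fix ?wrot_short.
apply: prepend_inj => om.
by rewrite -iter_wrot_prepend // iter_rot_period.
Qed.

Lemma wrotK k : cancel (wrot k) (iter (2 ^ k).-1 (wrot k)).
Proof. by move=> x; rewrite -iterSr prednK ?expn_gt0 // iter_wrot_period. Qed.

Lemma wrotKV k : cancel (iter (2 ^ k).-1 (wrot k)) (wrot k).
Proof. by move=> x; rewrite -iterS prednK ?expn_gt0 // iter_wrot_period. Qed.

Lemma iter_bij (T : Type) (f : T -> T) n : bijective f -> bijective (iter n f).
Proof.
case=> g fK gK; exists (iter n g) => x; elim: n => [//|n IH].
  by rewrite iterSr iterS fK.
by rewrite iterSr iterS gK.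
Qed.

Fixpoint short_words (M : nat) : seq word :=
  if M is M'.+1 then
    [::] :: [seq false :: w | w <- short_words M'] ++ [seq true :: w | w <- short_words M']
  else [::].

Lemma mem_short_words M x : (x \in short_words M) = (size x < M).
Proof.
have cons_inj (b : bool) : injective (cons b) by move=> ? ? [].
elim: M x => [|M IH] [|b w] //=.
rewrite in_cons /= mem_cat ltnS -IH.
have notin c c' : c' != c -> (c :: w \in [seq c' :: v | v <- short_words M]) = false.
  by move=> neq; apply/mapP => -[v _ [eq_c _]]; rewrite eq_c eqxx in neq.
by case: b; rewrite (mem_map (cons_inj _)) notin ?orbF.
Qed.

Lemma size_short_words M : (size (short_words M)).+1 = 2 ^ M.
Proof.
by elim: M => [//|M IH] /=; rewrite size_cat !size_map expnS -IH mul2n -addnn addnS addSn.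
Qed.

Lemma uniq_short_words M : uniq (short_words M).
Proof.
elim: M => [//|M IH] /=; rewrite mem_cat cat_uniq.
rewrite !map_inj_uniq ?IH //=; try by move=> ? ? [].
rewrite andbT negb_or -andbA; apply/and3P; split; try by apply/mapP => -[].
by apply/hasPn => _ /mapP [w _ ->]; apply/mapP => -[].
Qed.

Definition words_of_size (k : nat) : seq word := [seq w <- short_words k.+1 | size w == k].

Lemma mem_words_of_size k x : (x \in words_of_size k) = (size x == k).
Proof. by rewrite mem_filter mem_short_words andb_idr // => /eqP ->. Qed.

Lemma words_of_size_antichain k : max_prefix_antichain (words_of_size k).
Proof.
split=> [l l'|x].
  rewrite !mem_words_of_size => /eqP sl /eqP sl' /prefixP [s Es].
  move: sl'; rewrite Es size_cat sl -{2}(addn0 k) => /eqP.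
  by rewrite eqn_add2l => /nilP ->; rewrite cats0.
case: (leqP k (size x)) => kx.
  by exists (take k x); rewrite ?mem_words_of_size ?size_takel ?prefix_take.
exists (x ++ nseq (k - size x) false); last by rewrite prefix_prefix orbT.
by rewrite mem_words_of_size size_cat size_nseq subnKC // ltnW.
Qed.

Lemma is_pi_iter_wrot k i : is_pi (iter i (wrot k)) (iter i (rot k)).
Proof.
exists (words_of_size k); split; first exact: words_of_size_antichain.
by split=> l; rewrite mem_words_of_size => /eqP kl *;
  [apply: iter_wrot_cat | apply: iter_wrot_prepend]; rewrite kl.
Qed.

Lemma inQV_iter_wrot k i : inQV (iter i (wrot k)).
Proof.
split.
  by apply/iter_bij; exists (iter (2 ^ k).-1 (wrot k)); [apply: wrotK | apply: wrotKV].
exists (short_words k) => x; rewrite mem_short_words -leqNgt => kx b.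
by rewrite -!cats1 iter_wrot_cat.
Qed.

Lemma inT_iter_rot k i : inT (iter i (rot k)).
Proof.
split; last by elim: i => [//|i IH] a b c /IH; rewrite !iterS; apply: cyc_rot.
by exists (iter i (wrot k)); split; [exact: inQV_iter_wrot | exact: is_pi_iter_wrot].
Qed.

Lemma is_pi_eventually (tau : word -> word) (g : stream -> stream) (h : word -> word) k :
  is_pi tau g ->
  (forall x, k <= size x -> forall om, g (prepend x om) = prepend (h x) om) ->
  exists N, forall x, N <= size x -> tau x = h x.
Proof.
case=> L [[_ cover] [tau_cat g_prepend]] gh.
exists (maxn k (\max_(l <- L) size l)) => x; rewrite geq_max => /andP [kx Lx].
have [l lL lx_comparable] := cover x.
have l_le : size l <= size x := leq_trans (leq_bigmax_seq _ lL isT) Lx.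
have /prefixP [s x_eq] : prefix l x.
  case/orP: lx_comparable => [//|/prefixP [s l_eq]].
  move: l_le; rewrite l_eq size_cat -{2}(addn0 (size x)) leq_add2l leqn0 => /nilP s0.
  by rewrite s0 cats0 prefix_refl.
subst x; apply: prepend_inj => om.
by rewrite tau_cat // prepend_cat -g_prepend // -prepend_cat gh.
Qed.

Lemma short_words_stable (h g ginv : word -> word) N M : N <= M ->
  injective h -> cancel ginv g -> (forall y, size (ginv y) = size y) ->
  (forall x, N <= size x -> h x = g x) ->
  {in short_words M, forall x, h x \in short_words M}.
Proof.
move=> NM h_inj ginvK size_ginv hg x; rewrite !mem_short_words !ltnNge.
apply: contra => M_hx; have <- : ginv (h x) = x.
  by apply: h_inj; rewrite [h (ginv _)]hg ?ginvK // size_ginv (leq_trans NM).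
by rewrite size_ginv.
Qed.

Lemma count_fixed_short_words (f : word -> word) K M :
  (forall x, f x = x -> size x < K) -> count (fun x => f x == x) (short_words M) < 2 ^ K.
Proof.
move=> fixed_short; rewrite -size_short_words ltnS -size_filter.
apply: uniq_leq_size; first exact/filter_uniq/uniq_short_words.
by move=> x; rewrite mem_filter !mem_short_words => /andP [/eqP /fixed_short].
Qed.

Lemma wrot1_neq x : x != [::] -> wrot 1 x != x.
Proof.
case: x => [//|b w] _; apply/eqP => /(congr1 (nth false ^~ 0)).
by rewrite /wrot /= /rot /= addbT; case: b.
Qed.

Lemma iter_eq_order (T : finType) (f : T -> T) x n : injective f ->
  (iter n f x == x) = (order f x %| n).
Proof.
move=> f_inj; have iter_mul q : iter (q * order f x) f x = x.
  by elim: q => [//|q IH]; rewrite mulSn iterD IH iter_order.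
rewrite {1}(divn_eq n (order f x)) addnC iterD iter_mul /dvdn.
have := ltn_pmod n (order_gt0 f x).
case: (n %% order f x) => [_|r r_lt]; first by rewrite /= !eqxx.
apply/negbTE/eqP => fix_r.
by have := findex_iter r_lt; rewrite fix_r findex0.
Qed.

(* The points moved by [f ^ (p ^ n)] are those whose orbit has exactly
   [p ^ n.+1] elements, and they form a union of such orbits. *)
Lemma dvdn_card_unfixed (T : finType) (f : T -> T) p n : prime p -> injective f ->
  (forall x, iter (p ^ n.+1) f x = x) ->
  p ^ n.+1 %| #|[pred x | iter (p ^ n) f x != x]|.
Proof.
move=> p_pr f_inj period; set a := [pred x | _].
have a_order : a \subset order_set f (p ^ n.+1).
  apply/subsetP => x; rewrite !inE iter_eq_order //.
  have /(dvdn_pfactor _ _ p_pr) [m] : order f x %| p ^ n.+1.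
    by rewrite -iter_eq_order ?period.
  rewrite leq_eqVlt => /predU1P [-> -> //|m_lt ->].
  by rewrite dvdn_exp2l // -ltnS.
have a_closed : fclosed f a.
  move=> x _ /eqP <-; rewrite !inE -[iter _ f (f x)]iterSr iterS.
  by rewrite (inj_eq f_inj).
by rewrite -(fcard_order_set f_inj a_order a_closed) dvdn_mull.
Qed.

Lemma card_seq_sub_pred (T : choiceType) (s : seq T) (P : pred T) :
  uniq s -> #|[pred x : seq_sub s | P (val x)]| = count P s.
Proof.
move=> s_uniq; rewrite -[in RHS](val_seq_sub_enum s_uniq) count_map cardE.
rewrite /enum_mem size_filter -enumT.
apply/permP/uniq_perm; rewrite ?enum_uniq //; last first.
  by move=> x; rewrite mem_enum mem_seq_sub_enum.
by apply: (@map_uniq _ _ val); rewrite val_seq_sub_enum.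
Qed.

Lemma dvdn_count_unfixed (T : choiceType) (s : seq T) (f : T -> T) p n :
  prime p -> uniq s -> {in s, forall x, f x \in s} -> injective f ->
  (forall x, iter (p ^ n.+1) f x = x) ->
  p ^ n.+1 %| count (fun x => iter (p ^ n) f x != x) s.
Proof.
move=> p_pr s_uniq f_s f_inj period.
pose fs (x : seq_sub s) : seq_sub s := SeqSub (f_s _ (ssvalP x)).
have fsE i x : val (iter i fs x) = iter i f (val x).
  by elim: i => [//|i IH]; rewrite !iterS /= IH.
have fs_inj : injective fs by move=> x y /(congr1 val) /f_inj /val_inj.
have fs_period x : iter (p ^ n.+1) fs x = x by apply: val_inj; rewrite fsE period.
rewrite -card_seq_sub_pred //.
have := dvdn_card_unfixed p_pr fs_inj fs_period.
by congr (_ %| _); apply: eq_card => x; rewrite !inE -val_eqE fsE.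
Qed.

Section Splitting.

Variable j : (stream -> stream) -> word -> word.
Hypothesis j_split : splitting j.

Lemma splitting_bij t : inT t -> bijective (j t).
Proof. by move=> tT; case: (j_split.1 t tT) => -[f [_ [[j_bij _] _]]]. Qed.

Lemma splitting_id : j id =1 id.
Proof.
have idT : inT id := inT_iter_rot 0 0.
move=> x; apply: (bij_inj (splitting_bij idT)).
exact/esym/(j_split.2 _ _ _ idT idT idT (fun _ => erefl)).
Qed.

Lemma splitting_iter_rot k i : j (iter i (rot k)) =1 iter i (j (rot k)).
Proof.
elim: i => [|i IH] x; first exact: splitting_id.
rewrite iterS -IH.
exact: (j_split.2 _ _ _ (inT_iter_rot k 1) (inT_iter_rot k i) (inT_iter_rot k i.+1)).
Qed.

Lemma splitting_rot_eventually k :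
  exists N, forall x, N <= size x -> j (rot k) x = wrot k x.
Proof.
apply: (is_pi_eventually (j_split.1 _ (inT_iter_rot k 1)).2 (k := k)) => x kx om.
exact: prepend_wrot.
Qed.

End Splitting.

Theorem proposition2p10 :
  ~ exists j : (stream -> stream) -> (word -> word), splitting j.
Proof.
case=> j j_split.
have [N sigmaE] := splitting_rot_eventually j_split 1.
have [N' tauE] := splitting_rot_eventually j_split N.+2.
pose sigma := j (rot 1); pose tau := j (rot N.+2); pose M := maxn N' N.+2.
have sigma_fixed_short x : sigma x = x -> size x < N.+1.
  rewrite ltnNge => fixed; apply/negP => Nx.
  have x_nil : x != [::] by rewrite -size_eq0 -lt0n (leq_trans _ Nx).
  by have := wrot1_neq x_nil; rewrite -sigmaE ?(ltnW Nx) // -/sigma fixed eqxx.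
have tau_inj : injective tau := bij_inj (splitting_bij j_split (inT_iter_rot _ 1)).
have tau_short : {in short_words M, forall x, tau x \in short_words M}.
  exact: (short_words_stable (leq_maxl _ _) tau_inj (@wrotKV _) (@size_iter_wrot _ _) tauE).
have tau_period x : iter (2 ^ N.+2) tau x = x.
  by rewrite -splitting_iter_rot // iter_rot_period splitting_id.
have unfixed : 2 ^ N.+2 %| count (predC (fun x => sigma x == x)) (short_words M).
  have := dvdn_count_unfixed (isT : prime 2) (uniq_short_words M) tau_short tau_inj
    tau_period.
  by congr (_ %| _); apply: eq_count => x; rewrite /= -splitting_iter_rot // iter_rot_half.
set fixed := count (fun x => sigma x == x) (short_words M).
have fixed_lt : fixed < 2 ^ N.+1 := count_fixed_short_words M sigma_fixed_short.
have : 2 ^ N.+2 %| fixed.+1.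
  rewrite -(dvdn_addl _ unfixed) addSn count_predC size_short_words.
  by rewrite dvdn_exp2l // leq_maxr.
move/(dvdn_leq (ltn0Sn _)); rewrite expnS; lia.
Qed.
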